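(* Let $G$ be a finite group and $T$ a $G$-transfer system. Then $\mathrm{Hull}(T)=T_c$ if and only if $T$ is connected (has exactly one connected component).
   Context: A $G$-transfer system is a partial order $\to$ on the set of subgroups of $G$ such that: $K\to H$ implies $K\le H$; $H\to H$ for all $H$; $L\to K$ and $K\to H$ imply $L\to H$; $K\to H$ implies $K\cap L\to H\cap L$ for every $L\le G$; $K\to H$ implies $gKg^{-1}\to gHg^{-1}$ for all $g\in G$. Connected components are those of the underlying undirected graph on the subgroups of $G$ with edges $K\to H$. $T_c$ denotes the complete transfer system, containing $K\to H$ for all $K\le H\le G$. A transfer system is saturated if whenever $L\le K\le H$ and $L\to H$ is in it, then $K\to H$ is in it; $\mathrm{Hull}(T)$ is the smallest saturated $G$-transfer system containing $T$. *)

From mathcomp Require Import all_boot all_fingroup.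
From Stdlib Require Import Relation_Operators.
Set Implicit Arguments. Unset Strict Implicit. Unset Printing Implicit Defensive.

Local Open Scope group_scope.

Definition subgrel (gT : finGroupType) := {group gT} -> {group gT} -> Prop.

Definition is_transfer_system (gT : finGroupType) (G : {group gT}) (T : subgrel gT) : Prop :=
  [/\ (forall K H, T K H -> K \subset H /\ H \subset G),
      (forall H : {group gT}, H \subset G -> T H H),
      (forall L K H, T L K -> T K H -> T L H),
      (forall K H L : {group gT}, L \subset G -> T K H -> T (K :&: L)%G (H :&: L)%G)
    & (forall K H g, g \in G -> T K H -> T (K :^ g)%G (H :^ g)%G)].

(* Antisymmetry follows from K \subset H, so partial-order-ness is captured. *)

Definition complete_ts (gT : finGroupType) (G : {group gT}) : subgrel gT :=
  fun K H => K \subset H /\ H \subset G.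

Definition saturated (gT : finGroupType) (T : subgrel gT) : Prop :=
  forall L K H : {group gT}, L \subset K -> K \subset H -> T L H -> T K H.

Definition Hull (gT : finGroupType) (G : {group gT}) (T : subgrel gT) : subgrel gT :=
  fun K H => forall S : subgrel gT,
    is_transfer_system G S -> saturated S -> (forall K' H', T K' H' -> S K' H') -> S K H.

(* T is connected: the undirected graph on the subgroups of G with edges K -> H
   has exactly one connected component (the vertex set is nonempty, as 1 <= G). *)
Definition ts_connected (gT : finGroupType) (G : {group gT}) (T : subgrel gT) : Prop :=
  forall H K : {group gT}, H \subset G -> K \subset G ->
    clos_refl_sym_trans {group gT} T H K.

From mathcomp Require Import all_boot all_fingroup.
From Stdlib Require Import Relation_Operators.

(* If Hull(T) is complete, it lies below the saturated transfer system
   "K <= H <= G with K and H in the same component of T", so every K <= G is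
   connected to G.  Conversely, in a saturated transfer system S any two subgroups
   A, B of G joined by a zig-zag satisfy A :&: B -> A and A :&: B -> B; this is
   carried along the zig-zag by restricting the next edge to A, composing and
   saturating.  So if T is connected, every saturated S containing T contains
   K -> H for all K <= H <= G. *)

Local Open Scope group_scope.

Lemma clos_rst_map {A B : Type} {R : A -> A -> Prop} {R' : B -> B -> Prop}
    (f : A -> B) :
  (forall x y, R x y -> R' (f x) (f y)) ->
  forall x y, clos_refl_sym_trans A R x y -> clos_refl_sym_trans B R' (f x) (f y).
Proof.
move=> fR x y; elim=> {x y} [x y /fR | x | x y _ | x y z _ ? _].
- exact: rst_step.
- exact: rst_refl.
- exact: rst_sym.
- exact: rst_trans.
Qed.

Definition component_ts {gT : finGroupType} (G : {group gT}) (T : subgrel gT) :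
  subgrel gT :=
  fun K H => [/\ K \subset H, H \subset G & clos_refl_sym_trans _ T K H].

Section TransferSystems.
Context {gT : finGroupType}.
Implicit Types (G : {group gT}) (T S : subgrel gT) (A B C H K L : {group gT}).

Lemma setIC_group A B : (A :&: B)%G = (B :&: A)%G.
Proof. by apply: group_inj; rewrite /= setIC. Qed.

Lemma setIidl_group A B : A \subset B -> (A :&: B)%G = A.
Proof. by move=> sAB; apply: group_inj; apply/setIidPl. Qed.

Lemma conj_subG G A g : g \in G -> A \subset G -> A :^ g \subset G.
Proof. by move=> Gg sAG; rewrite -(conjGid Gg) conjSg. Qed.

Lemma complete_ts_transfer G : is_transfer_system G (complete_ts G).
Proof.
split=> [// | // | L K H [sLK _] [sKH sHG] | K H L sLG [sKH _] |
         K H g Gg [sKH sHG]].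
- by split; [exact: subset_trans sLK sKH | ].
- by split; [exact: setSI | exact: subset_trans (subsetIr _ _) sLG].
- by split; [rewrite conjSg | exact: conj_subG].
Qed.

Lemma complete_ts_saturated G : saturated (complete_ts G).
Proof. by move=> L K H _ sKH [_ sHG]. Qed.

Lemma Hull_sub_complete G T : is_transfer_system G T ->
  forall K H, Hull G T K H -> complete_ts G K H.
Proof.
move=> [subT _ _ _ _] K H; apply.
- exact: complete_ts_transfer.
- exact: complete_ts_saturated.
- exact: subT.
Qed.

Section Components.
Context {G : {group gT}} {T : subgrel gT} (T_ts : is_transfer_system G T).

Lemma clos_rst_setI L {A B} : L \subset G ->
  clos_refl_sym_trans _ T A B -> clos_refl_sym_trans _ T (A :&: L)%G (B :&: L)%G.
Proof.
case: T_ts => _ _ _ resT _ sLG.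
exact: (clos_rst_map (fun X => X :&: L)%G (fun X Y => resT X Y L sLG)).
Qed.

Lemma clos_rst_conj g {A B} : g \in G ->
  clos_refl_sym_trans _ T A B -> clos_refl_sym_trans _ T (A :^ g)%G (B :^ g)%G.
Proof.
case: T_ts => _ _ _ _ conjT Gg.
exact: (clos_rst_map (fun X => X :^ g)%G (fun X Y => conjT X Y g Gg)).
Qed.

Lemma clos_rst_subG {A B} :
  clos_refl_sym_trans _ T A B -> (A \subset G <-> B \subset G).
Proof.
case: T_ts => subT _ _ _ _.
elim=> {A B} [X Y TXY | X | X Y _ IH | X Y Z _ IH1 _ IH2]; try tauto.
have [sXY sYG] := subT X Y TXY.
by split=> // _; exact: subset_trans sXY sYG.
Qed.

Lemma sub_component_ts K H : T K H -> component_ts G T K H.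
Proof.
case: T_ts => subT _ _ _ _ TKH; have [sKH sHG] := subT K H TKH.
by split=> //; apply: rst_step.
Qed.

Lemma component_ts_transfer : is_transfer_system G (component_ts G T).
Proof.
split=> [K H [] // | H sHG | L K H [sLK _ cLK] [sKH sHG cKH] |
         K H L sLG [sKH _ cKH] | K H g Gg [sKH sHG cKH]].
- by split=> //; apply: rst_refl.
- by split=> //; [exact: subset_trans sLK sKH | exact: rst_trans cKH].
- split; [exact: setSI | exact: subset_trans (subsetIr _ _) sLG |].
  exact: clos_rst_setI.
- by split; [rewrite conjSg | exact: conj_subG | exact: clos_rst_conj].
Qed.

Lemma component_ts_saturated : saturated (component_ts G T).
Proof.
move=> L K H sLK sKH [_ sHG cLH]; split=> //.
have := clos_rst_setI K (subset_trans sKH sHG) cLH.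
rewrite setIidl_group // setIC_group setIidl_group // => cLK.
exact: rst_trans _ _ _ _ _ (rst_sym _ _ _ _ cLK) cLH.
Qed.

End Components.

Section Saturated.
Context {G : {group gT}} {S : subgrel gT}.
Hypotheses (S_ts : is_transfer_system G S) (S_sat : saturated S).

Lemma saturated_meet_trans A B C : A \subset G ->
  S (A :&: B)%G A -> S (B :&: C)%G B -> S (A :&: C)%G A.
Proof.
case: S_ts => _ _ transS resS _ sAG SAB_A SBC_B.
have := resS _ _ _ sAG SBC_B; rewrite [(B :&: A)%G]setIC_group.
move=> /transS/(_ SAB_A) SBCA_A; apply: S_sat SBCA_A; last exact: subsetIl.
by rewrite /= setIC setIS // subsetIr.
Qed.

Lemma saturated_clos_meet A B : clos_refl_sym_trans _ S A B -> A \subset G ->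
  S (A :&: B)%G A /\ S (A :&: B)%G B.
Proof.
case: (S_ts) => subS reflS _ _ _.
elim=> {A B} [X Y SXY | X | X Y cXY IH | X Y Z cXY IH1 cYZ IH2] sXG.
- by rewrite setIidl_group; [split=> //; apply: reflS | case: (subS X Y SXY)].
- by rewrite setIidl_group //; split; apply: reflS.
- have [SYX_Y SYX_X] := IH ((clos_rst_subG S_ts cXY).2 sXG).
  by rewrite setIC_group.
- have sYG := (clos_rst_subG S_ts cXY).1 sXG.
  have sZG := (clos_rst_subG S_ts cYZ).1 sYG.
  have [SXY_X SXY_Y] := IH1 sXG; have [SYZ_Y SYZ_Z] := IH2 sYG.
  split; first exact: saturated_meet_trans SXY_X SYZ_Y.
  by rewrite setIC_group; apply: (saturated_meet_trans Z Y X sZG);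
    rewrite setIC_group.
Qed.

Lemma saturated_clos_transfer K H : K \subset H -> H \subset G ->
  clos_refl_sym_trans _ S K H -> S K H.
Proof.
move=> sKH sHG /saturated_clos_meet[]; first exact: subset_trans sKH sHG.
by rewrite setIidl_group.
Qed.

End Saturated.
End TransferSystems.

Theorem mainTheorem3 (gT : finGroupType) (G : {group gT}) (T : subgrel gT) :
  is_transfer_system G T ->
  ((forall K H : {group gT}, Hull G T K H <-> complete_ts G K H) <-> ts_connected G T).
Proof.
move=> T_ts; split=> [hullE | connT K H].
- have clos_toG (X : {group gT}) : X \subset G -> clos_refl_sym_trans _ T X G.
    move=> sXG; have hullXG : Hull G T X G by apply/hullE.
    have [//] := hullXG _ (component_ts_transfer T_ts)
      (component_ts_saturated T_ts) (sub_component_ts T_ts).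
  move=> H K sHG sKG.
  exact: rst_trans _ _ _ _ _ (clos_toG H sHG) (rst_sym _ _ _ _ (clos_toG K sKG)).
- split; first exact: Hull_sub_complete T_ts K H.
  move=> [sKH sHG] S S_ts S_sat TS.
  apply: (saturated_clos_transfer S_ts S_sat K H sKH sHG).
  exact (clos_rst_map id TS K H (connT K H (subset_trans sKH sHG) sHG)).
Qed.
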